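(* Let $H=(V,E)$ be a $3$-uniform hypergraph in which every vertex has even degree, and let $G=\mathcal G(H)$ be its incidence graph. The following are equivalent: (1) $H$ is quasi-eulerian; (2) $G$ has a spanning subgraph in which every v-vertex has even degree and every e-vertex has degree exactly $1$; (3) $E$ can be partitioned into pairs $\{e,e'\}$ of distinct edges with $e\cap e'\ne\emptyset$.
   Context: A hypergraph $H=(V,E)$ consists of a finite nonempty vertex set $V$, a finite edge set $E$ disjoint from $V$, and an incidence function assigning to each edge $e\in E$ a subset of $V$ (also denoted $e$); distinct edges may have the same vertex set. $H$ is $3$-uniform if $|e|=3$ for all $e\in E$. The degree of a vertex is the number of edges containing it. A walk is a sequence $W=v_0e_1v_1e_2\cdots e_kv_k$ with $v_i\in V$, $e_i\in E$, such that for each $i$, $v_{i-1}\ne v_i$ and $v_{i-1},v_i\in e_i$; the $v_i$ are its anchors. $W$ is closed if $k\ge 2$ and $v_0=v_k$; it is a strict trail if $e_1,\dots,e_k$ are pairwise distinct. An Euler family of $H$ is a family of closed strict trails such that every edge of $H$ lies in exactly one trail and no two trails have a common anchor; $H$ is quasi-eulerian if it has one. The incidence graph $\mathcal G(H)$ is the simple bipartite graph with vertex set $V\cup E$ in which $v\in V$ and $e\in E$ are adjacent iff $v\in e$; vertices in $V$ are v-vertices and those in $E$ e-vertices. *)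

From mathcomp Require Import all_boot.
Set Implicit Arguments. Unset Strict Implicit. Unset Printing Implicit Defensive.

(* A hypergraph is given by finite types V (vertices) and E (edges) together
   with an incidence function inc : E -> {set V}.  Distinct edges may have the
   same vertex set. *)

Section Hyper.
Variables (V E : finType) (inc : E -> {set V}).

Definition three_uniform : Prop := forall e : E, #|inc e| = 3.

Definition vdeg (v : V) : nat := #|[set e | v \in inc e]|.

(* A walk v0 e1 v1 ... ek vk is represented by its first anchor v0 and the
   sequence [:: (e1,v1); ...; (ek,vk)]. *)
Definition walk := (V * seq (E * V))%type.

Fixpoint walk_steps (v : V) (s : seq (E * V)) : bool :=
  match s with
  | [::] => true
  | (e, w) :: s' => [&& v != w, v \in inc e, w \in inc e & walk_steps w s']
  end.

Definition is_walk (W : walk) : bool := walk_steps W.1 W.2.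
Definition walk_edges (W : walk) : seq E := map fst W.2.
Definition anchors (W : walk) : seq V := W.1 :: map snd W.2.

Definition is_closed (W : walk) : bool :=
  (2 <= size W.2) && (last W.1 (map snd W.2) == W.1).

Definition is_strict_trail (W : walk) : bool := uniq (walk_edges W).

Definition is_closed_strict_trail (W : walk) : bool :=
  [&& is_walk W, is_closed W & is_strict_trail W].

(* A family of trails is a finite list of trails; "no two trails have a common
   anchor" is required for every pair of distinct positions in the list. *)
Definition euler_family (F : seq walk) : Prop :=
  [/\ all is_closed_strict_trail F,
      forall e : E, count (fun W => e \in walk_edges W) F = 1
    & pairwise (fun W1 W2 => [disjoint anchors W1 & anchors W2]) F].

Definition quasi_eulerian : Prop := exists F : seq walk, euler_family F.

(* Incidence graph: bipartite graph on V + E, with edge {v,e} iff v \in inc e.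
   A spanning subgraph is determined by a subset S of these incidence edges. *)
Definition incidence_edge (p : V * E) : bool := p.1 \in inc p.2.

Definition good_spanning_subgraph (S : {set V * E}) : Prop :=
  [/\ forall p, p \in S -> incidence_edge p,
      forall v : V, ~~ odd #|[set e | (v, e) \in S]|
    & forall e : E, #|[set v | (v, e) \in S]| = 1].

Definition intersecting_pair_partition (P : {set {set E}}) : Prop :=
  partition P [set: E] /\
  forall B, B \in P -> exists e e' : E,
    [/\ e != e', B = [set e; e'] & inc e :&: inc e' != set0].

End Hyper.

From mathcomp Require Import all_boot.
Set Implicit Arguments. Unset Strict Implicit. Unset Printing Implicit Defensive.

(* Each edge e of an Euler family lies on exactly one trail, between two
   consecutive anchors of it.  Deleting these two incidences of every edge from
   the incidence graph leaves e with a single incidence (as |e| = 3), and removes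
   an even number of incidences at every vertex, since the trails are closed and
   have pairwise disjoint anchor sets.  Conversely, given such a spanning
   subgraph, the two other vertices of each edge form a loopless multigraph on V
   with even degrees.  As in Euler's theorem, its edges split into closed walks:
   start from one-edge walks and repeatedly join an open walk at its endpoint v
   to another walk ending at v, which exists by parity.  Splicing closed walks
   that share an anchor then makes the anchor sets disjoint.  Finally, the edges
   attached to a vertex v by the spanning subgraph are evenly many and all
   contain v, so they can be paired off; conversely the two edges of an
   intersecting pair can both be attached to a common vertex. *)

Notation last_anchor x s := (last x (map snd s)).

Definition family_steps (V E : finType) (G : seq (walk V E)) :=
  flatten [seq W.2 | W <- G].
Notation family_edges G := (map fst (family_steps G)).

Section ClosedWalks.
Variables (V E : finType) (inc : E -> {set V}).
Local Notation walk := (walk V E).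
Local Notation steps := (walk_steps inc).

Lemma walk_steps_cat x s1 s2 :
  steps x (s1 ++ s2) = steps x s1 && steps (last_anchor x s1) s2.
Proof. by elim: s1 x => [|[e w] s IH] x //=; rewrite IH !andbA. Qed.

Lemma last_anchor_cat (x : V) (s1 s2 : seq (E * V)) :
  last_anchor x (s1 ++ s2) = last_anchor (last_anchor x s1) s2.
Proof. by rewrite map_cat last_cat. Qed.

Fixpoint rev_steps (x : V) (s : seq (E * V)) : seq (E * V) :=
  if s is (e, w) :: s' then rcons (rev_steps w s') (e, x) else [::].

Lemma last_anchor_rev_steps (x : V) (s : seq (E * V)) :
  last_anchor (last_anchor x s) (rev_steps x s) = x.
Proof. by case: s => [|[e w] s] //=; rewrite map_rcons last_rcons. Qed.

Lemma walk_steps_rev x s : steps x s -> steps (last_anchor x s) (rev_steps x s).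
Proof.
elim: s x => [|[e w] s IH] x //= /and4P [xw xe we Hs].
by rewrite -cats1 walk_steps_cat IH //= last_anchor_rev_steps eq_sym xw xe we.
Qed.

Lemma map_fst_rev_steps (x : V) (s : seq (E * V)) :
  map fst (rev_steps x s) = rev (map fst s).
Proof. by elim: s x => [|[e w] s IH] x //=; rewrite map_rcons IH rev_cons. Qed.

Lemma size_rev_steps (x : V) (s : seq (E * V)) : size (rev_steps x s) = size s.
Proof. by rewrite -(size_map fst) map_fst_rev_steps size_rev size_map. Qed.

Definition closed_walk (W : walk) := is_walk inc W && is_closed W.

Lemma closed_walk_anchors W : closed_walk W -> anchors W =i map snd W.2.
Proof.
case: W => x [|[e w] s] /andP [_ /andP [//= _ /eqP closedW]] y.
have x_anchor : x \in w :: map snd s by rewrite -closedW mem_last.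
by rewrite /anchors /= [LHS]in_cons; case: eqP => // ->.
Qed.

Lemma rotate_closed_walk x s u : closed_walk (x, s) -> u \in map snd s ->
  exists2 s', closed_walk (u, s') & perm_eq s' s.
Proof.
move=> /andP [walk_s /andP [size_s /eqP closed_s]] us.
set i := index u (map snd s).
have lt_i : i < size s by rewrite -(size_map snd) index_mem.
have last_take : last_anchor x (take i.+1 s) = u.
  by rewrite map_take (last_nth x) size_takel ?size_map //= nth_take ?nth_index.
have last_drop : last_anchor u (drop i.+1 s) = x.
  by rewrite -last_take -last_anchor_cat cat_take_drop.
exists (rot i.+1 s); last by rewrite perm_rot.
move: walk_s; rewrite /is_walk /= -{1}(cat_take_drop i.+1 s) walk_steps_cat last_take.
case/andP=> walk_take walk_drop.
by rewrite /closed_walk /is_walk /is_closed /= size_rot walk_steps_cat last_anchor_cat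
  last_drop walk_drop walk_take last_take size_s eqxx.
Qed.

Lemma merge_closed_walks W1 W2 u : closed_walk W1 -> closed_walk W2 ->
  u \in anchors W1 -> u \in anchors W2 ->
  exists2 W, closed_walk W & perm_eq W.2 (W1.2 ++ W2.2).
Proof.
case: W1 W2 => [x1 s1] [x2 s2] c1 c2.
rewrite (closed_walk_anchors c1) (closed_walk_anchors c2) => u1 u2.
have [s1' c1' p1] := rotate_closed_walk c1 u1.
have [s2' c2' p2] := rotate_closed_walk c2 u2.
exists (u, s1' ++ s2'); last by rewrite perm_cat.
move: c1' c2'; rewrite /closed_walk /is_walk /is_closed /=.
move=> /and3P [w1 z1 /eqP l1] /and3P [w2 _ /eqP l2].
rewrite walk_steps_cat last_anchor_cat l1 l2.
by rewrite w1 w2 eqxx size_cat (leq_trans z1) ?leq_addr.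
Qed.

Lemma family_steps_cons (W : walk) (G : seq walk) :
  family_steps (W :: G) = W.2 ++ family_steps G.
Proof. by []. Qed.

Definition anchor_disjoint (W1 W2 : walk) := [disjoint anchors W1 & anchors W2].

Lemma perm_family_steps (G1 G2 : seq walk) :
  perm_eq G1 G2 -> perm_eq (family_steps G1) (family_steps G2).
Proof. by move=> pG; apply/perm_flatten/perm_map. Qed.

Lemma all_anchor_disjoint W G : closed_walk W -> all closed_walk G ->
  all (anchor_disjoint W) G = [disjoint map snd W.2 & map snd (family_steps G)].
Proof.
move=> cW; elim: G => [|Y G IH] /=.
  by rewrite disjoint_sym disjoint_has.
case/andP=> cY /IH ->; rewrite /anchor_disjoint family_steps_cons map_cat.
rewrite (eq_disjoint (closed_walk_anchors cW)) (eq_disjoint_r (closed_walk_anchors cY)).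
by rewrite [RHS]disjoint_sym disjoint_cat disjoint_sym [X in _ && X]disjoint_sym.
Qed.

Lemma insert_closed_walk W G :
  closed_walk W -> all closed_walk G -> pairwise anchor_disjoint G ->
  exists G', [/\ all closed_walk G', pairwise anchor_disjoint G'
               & perm_eq (family_steps G') (W.2 ++ family_steps G)].
Proof.
elim: G W => [|H G IH] W cW /=.
  by move=> _ _; exists [:: W]; rewrite /= cW.
case/andP=> cH cG /andP [dH dG].
have [dWH | ] := boolP (anchor_disjoint W H).
  have [G' [cG' dG' pG']] := IH W cW cG dG.
  exists (H :: G'); split; rewrite /= ?cH ?dG' ?andbT //.
    rewrite all_anchor_disjoint // (eq_disjoint_r (perm_mem (perm_map snd pG'))).
    rewrite map_cat disjoint_sym disjoint_cat [X in _ && X]disjoint_sym.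
    rewrite -all_anchor_disjoint // dH andbT -(eq_disjoint (closed_walk_anchors cW)).
    by rewrite -(eq_disjoint_r (closed_walk_anchors cH)).
  by rewrite !family_steps_cons perm_sym perm_catCA perm_cat2l perm_sym.
rewrite /anchor_disjoint disjoint_has negbK => /hasP [u uW uH].
have [M cM pM] := merge_closed_walks cW cH uW uH.
have [G' [cG' dG' pG']] := IH M cM cG dG.
exists G'; split => //; rewrite family_steps_cons catA.
by rewrite (perm_trans pG') // perm_cat2r.
Qed.

Lemma disjoint_closed_walks F : all closed_walk F ->
  exists G, [/\ all closed_walk G, pairwise anchor_disjoint G
              & perm_eq (family_steps G) (family_steps F)].
Proof.
elim: F => [|W F IH] /=; first by exists [::].
case/andP=> cW /IH [G [cG dG pG]].
have [G' [cG' dG' pG']] := insert_closed_walk cW cG dG.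
by exists G'; rewrite family_steps_cons (perm_trans pG') ?perm_cat2l.
Qed.

Lemma uniq_walk_edges (G : seq walk) W :
  uniq (family_edges G) -> W \in G -> uniq (walk_edges W).
Proof.
elim: G => [|Y G IH] //; rewrite family_steps_cons map_cat cat_uniq inE.
by case/and3P=> uY _ uG /orP [/eqP -> // | ]; apply: IH.
Qed.

Lemma count_walk_edges (G : seq walk) e : uniq (family_edges G) ->
  count (fun W => e \in walk_edges W) G = (e \in family_edges G).
Proof.
elim: G => [|W G IH] //; rewrite family_steps_cons map_cat cat_uniq mem_cat /=.
case/and3P=> _ /hasPn disjWG /IH ->; rewrite /walk_edges.
case eG: (e \in _); last by rewrite orbF addn0.
by rewrite (negbTE (disjWG e eG)).
Qed.

Lemma euler_family_of_closed_walks G :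
  all closed_walk G -> pairwise anchor_disjoint G ->
  perm_eq (family_edges G) (enum E) -> euler_family inc G.
Proof.
move=> cG dG pG; have uG : uniq (family_edges G).
  by rewrite (perm_uniq pG) enum_uniq.
split=> // [|e]; last by rewrite count_walk_edges // (perm_mem pG) mem_enum.
apply/allP=> W WG; have /andP [wW cW] := allP cG W WG.
by rewrite /is_closed_strict_trail wW cW /is_strict_trail (uniq_walk_edges uG).
Qed.

End ClosedWalks.

Lemma odd_sum_has_odd (I : Type) (r : seq I) (F : I -> nat) :
  odd (\sum_(i <- r) F i) -> has (fun i => odd (F i)) r.
Proof.
elim: r => [|i r IH]; first by rewrite big_nil.
by rewrite big_cons oddD /=; case: (odd (F i)) => //= /IH.
Qed.

Section Segments.
Variables (V E : finType) (inc : E -> {set V}).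
Local Notation walk := (walk V E).
Local Notation closed_walk := (closed_walk inc).

Definition segment (W : walk) := is_walk inc W && (0 < size W.2).

Definition end_count (v : V) (W : walk) : nat :=
  (W.1 == v) + (last_anchor W.1 W.2 == v).

Definition even_ends (L : seq walk) :=
  forall v, ~~ odd (\sum_(W <- L) end_count v W).

Lemma segment_closed_walk W :
  segment W -> last_anchor W.1 W.2 = W.1 -> closed_walk W.
Proof.
case: W => x s /= /andP [walkW size_s] closedW.
rewrite /closed_walk walkW /is_closed /= closedW eqxx andbT.
case: s walkW size_s closedW => [|[e w] [|st s]] //= /and4P [xw _ _ _] _ closedW.
by move: xw; rewrite -closedW eqxx.
Qed.

Lemma orient_segment W v : segment W -> odd (end_count v W) ->
  exists s, [/\ segment (v, s), perm_eq (map fst s) (walk_edges W)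
              & forall u, end_count u (v, s) = end_count u W].
Proof.
case: W => x s /andP [/= walkW size_s]; rewrite /end_count /=.
have [<- _ | _] := eqVneq x v.
  by exists s; split; rewrite // /segment walkW.
rewrite add0n oddb => /eqP <-.
exists (rev_steps x s); split => [||u].
- by rewrite /segment /is_walk /= walk_steps_rev // size_rev_steps.
- by rewrite map_fst_rev_steps perm_rev.
- by rewrite /= last_anchor_rev_steps addnC.
Qed.

Lemma join_open_segment L W : all segment L -> even_ends L -> W \in L ->
  last_anchor W.1 W.2 != W.1 ->
  exists L', [/\ size L' < size L, all segment L', even_ends L'
               & perm_eq (family_edges L') (family_edges L)].
Proof.
case: W => a p segL evenL WL /= open_p; set v := last_anchor a p in open_p.
have pL1 := perm_to_rem WL; set L1 := rem _ L in pL1.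
have /hasP [W2 W2L1 oddW2] : has (fun W => odd (end_count v W)) L1.
  apply: odd_sum_has_odd; move: (evenL v).
  by rewrite (perm_big _ pL1) big_cons /end_count /= eqxx eq_sym (negbTE open_p) add1n negbK.
have pL : perm_eq L [:: (a, p), W2 & rem W2 L1].
  by rewrite (perm_trans pL1) // perm_cons perm_to_rem.
have segW2 : segment W2 by apply: (allP segL); rewrite (perm_mem pL) !inE eqxx orbT.
have [q [segq pq endq]] := orient_segment segW2 oddW2.
exists ((a, p ++ q) :: rem W2 L1); split.
- by rewrite (perm_size pL).
- have := segL; rewrite (perm_all _ pL) /= => /and3P [segp _ ->].
  move: segp segq; rewrite /segment /is_walk /= walk_steps_cat size_cat addn_gt0.
  by case/andP=> -> ->; case/andP=> -> _.
- move=> u; move: (evenL u); rewrite (perm_big _ pL) !big_cons -endq.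
  by rewrite /end_count /= last_anchor_cat -/v !oddD -!addbA addKb.
- rewrite (permPr (perm_map fst (perm_family_steps pL))) !family_steps_cons !map_cat.
  by rewrite -catA perm_cat2l perm_cat2r.
Qed.

Lemma closed_walks_of_segments L : all segment L -> even_ends L ->
  exists2 F, all closed_walk F & perm_eq (family_edges F) (family_edges L).
Proof.
have [n] := ubnP (size L); elim: n L => // n IH L /ltnSE sizeL segL evenL.
have [closedL | /allPn [W WL openW]] :=
  boolP (all (fun W : walk => last_anchor W.1 W.2 == W.1) L).
  exists L => //; apply/allP => W WL.
  by apply: segment_closed_walk; [apply: (allP segL) | apply/eqP/(allP closedL)].
have [L' [sizeL' segL' evenL' pL']] := join_open_segment segL evenL WL openW.
have [F cF pF] := IH L' (leq_trans sizeL' sizeL) segL' evenL'.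
by exists F; rewrite // (perm_trans pF).
Qed.

End Segments.

Lemma card_preimsetD (aT rT : finType) (f : aT -> rT) (A B : {set rT}) :
  B \subset A -> #|f @^-1: (A :\: B)| + #|f @^-1: B| = #|f @^-1: A|.
Proof.
move=> sBA; rewrite preimsetD -(cardsID (f @^-1: B) (f @^-1: A)).
by rewrite (setIidPr (preimsetS f sBA)) addnC.
Qed.

Lemma sum_enum_pred (T : finType) (P : pred T) : \sum_(t <- enum T) P t = #|P|.
Proof.
rewrite big_enum -sum1_card [RHS]big_mkcond; apply: eq_bigr => t _.
by rewrite unfold_in; case: (P t).
Qed.

Lemma count_eq1_eq (T : eqType) (p : pred T) (s : seq T) x y :
  count p s = 1 -> x \in s -> p x -> y \in s -> p y -> x = y.
Proof.
move=> count_p xs px ys py; apply/eqP; apply: contraT => xy.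
move: count_p; rewrite (permP (perm_to_rem xs)) /= px add1n => -[] /eqP.
rewrite -leqn0 leqNgt -has_count => /hasPn /(_ y).
by rewrite rem_mem 1?eq_sym // py => /(_ isT).
Qed.

Lemma pairwise_disjoint_eq (T : eqType) (U : finType) (f : T -> seq U) s x y u :
  pairwise (fun a b => [disjoint f a & f b]) s ->
  x \in s -> y \in s -> u \in f x -> u \in f y -> x = y.
Proof.
elim: s => [|z s IH] //= /andP [dz ds]; rewrite !inE.
case/orP=> [/eqP -> | xs] /orP [/eqP -> | ys] // ux uy.
- by rewrite (disjointFr (allP dz y ys) ux) in uy.
- by rewrite (disjointFr (allP dz x xs) uy) in ux.
- exact: IH.
Qed.

Section Incidences.
Variables (V E : finType) (inc : E -> {set V}).

Definition incidences : {set V * E} := [set p | incidence_edge inc p].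

Lemma vertex_fiber_setD (T : {set V * E}) v : T \subset incidences ->
  #|[set e | (v, e) \in incidences :\: T]| + #|[set e | (v, e) \in T]| = vdeg inc v.
Proof.
move=> sTI; rewrite (card_preimsetD (pair v) sTI); apply: eq_card => e.
by rewrite !inE.
Qed.

Lemma edge_fiber_setD (T : {set V * E}) e : T \subset incidences ->
  #|[set u | (u, e) \in incidences :\: T]| + #|[set u | (u, e) \in T]| = #|inc e|.
Proof.
move=> sTI; rewrite (card_preimsetD (fun u => (u, e)) sTI); apply: eq_card => u.
by rewrite !inE.
Qed.

Lemma quasi_eulerian_of_spanning_subgraph S :
  three_uniform inc -> (forall v, ~~ odd (vdeg inc v)) ->
  good_spanning_subgraph inc S -> quasi_eulerian inc.
Proof.
move=> uniH evenH [SI evenS oneS].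
have sSI : S \subset incidences by apply/subsetP => p /SI; rewrite inE.
pose N e := [set u | (u, e) \in incidences :\: S].
have NI e u : u \in N e -> u \in inc e by rewrite !inE => /andP [].
have /fin_all_exists [ends endsP] :
    forall e, exists xy : V * V, xy.1 != xy.2 /\ N e = [set xy.1; xy.2].
  move=> e; have /cards2P [x [y [xy Ne]]] : #|N e| == 2.
    by rewrite -(eqn_add2r 1) -[X in _ + X](oneS e) edge_fiber_setD // uniH.
  by exists (x, y).
pose L := [seq ((ends e).1, [:: (e, (ends e).2)]) | e <- enum E].
have [F cF pF] : exists2 F, all (closed_walk inc) F &
    perm_eq (family_edges F) (family_edges L).
  apply: closed_walks_of_segments => [|v].
    apply/allP=> _ /mapP [e _ ->]; have [xy Ne] := endsP e.
    by rewrite /segment /is_walk /= xy !(NI e) ?Ne ?set21 ?set22.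
  have -> : \sum_(W <- L) end_count v W = #|[set e | (v, e) \in incidences :\: S]|.
    have /eq_card <- : [pred e | v \in N e] =i [set e | (v, e) \in incidences :\: S].
      by move=> e; rewrite !inE.
    rewrite big_map -sum_enum_pred; apply: eq_bigr => e _.
    have [xy Ne] := endsP e; rewrite /= Ne /end_count /= !inE ![v == _]eq_sym.
    by case: ((ends e).1 =P v) xy => [-> | _ _]; rewrite ?add0n // eq_sym => /negbTE ->.
  apply/negP=> oddN; move: (evenH v); rewrite -(vertex_fiber_setD v sSI) oddD.
  by rewrite oddN (negbTE (evenS v)).
have [G [cG dG pG]] := disjoint_closed_walks cF.
exists G; apply: euler_family_of_closed_walks => //.
rewrite (perm_trans (perm_map fst pG)) // (perm_trans pF) //.
suff -> : family_edges L = enum E by [].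
by rewrite /family_steps /L; elim: (enum E) => //= e s ->.
Qed.

Fixpoint trail_incidences (x : V) (s : seq (E * V)) : seq (V * E) :=
  if s is (e, w) :: s' then (x, e) :: (w, e) :: trail_incidences w s' else [::].

Lemma mem_trail_incidences x s p : p \in trail_incidences x s ->
  (p.1 \in x :: map snd s) && (p.2 \in map fst s).
Proof.
elim: s x => [|[e w] s IH] x //=; rewrite !inE.
case/or3P=> [/eqP -> | /eqP -> | /IH /andP [a b]] /=; rewrite ?eqxx ?orbT //.
by rewrite b orbT; move: a; rewrite inE => /orP [-> | ->]; rewrite !orbT.
Qed.

Lemma trail_incidences_sub x s p :
  walk_steps inc x s -> p \in trail_incidences x s -> p \in incidences.
Proof.
elim: s x => [|[e w] s IH] x //= /and4P [_ xe we walk_s]; rewrite !inE.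
by case/or3P=> [/eqP -> | /eqP -> | /(IH _ walk_s)]; rewrite ?inE.
Qed.

Lemma odd_trail_vertex_fiber x s v : walk_steps inc x s -> uniq (map fst s) ->
  odd #|[set e | (v, e) \in trail_incidences x s]| = (x == v) (+) (last_anchor x s == v).
Proof.
elim: s x => [|[e w] s IH] x /=.
  move=> _ _; rewrite addbb (_ : [set e | _] = set0) ?cards0 //.
move=> /and4P [xw _ _ walk_s] /andP [eN uniq_s].
set R := [set e0 | (v, e0) \in trail_incidences w s].
have eR : e \notin R by rewrite inE; apply: contra eN => /mem_trail_incidences /andP [].
have -> : [set e0 | (v, e0) \in (x, e) :: (w, e) :: trail_incidences w s] =
          if (x == v) || (w == v) then e |: R else R.
  apply/setP => e0; rewrite !inE /= !xpair_eqE ![v == _]eq_sym.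
  by case: (x == v); case: (w == v); rewrite /= ?inE ?orbA ?orbb.
have {}xw : ~~ ((x == v) && (w == v)).
  by apply: contra xw => /andP [/eqP -> /eqP ->].
have -> : #|if (x == v) || (w == v) then e |: R else R| = ((x == v) || (w == v)) + #|R|.
  by case: ifP; rewrite ?cardsU1 ?eR.
rewrite oddD IH //.
by move: xw; case: (x == v); case: (w == v); case: (_ == v).
Qed.

Lemma card_trail_edge_fiber x s e : walk_steps inc x s -> uniq (map fst s) ->
  e \in map fst s -> #|[set u | (u, e) \in trail_incidences x s]| = 2.
Proof.
elim: s x => [|[e' w] s IH] x //= /and4P [xw _ _ walk_s] /andP [e'N uniq_s].
rewrite inE => /orP [/eqP ee' | es].
  subst e'; suff -> : [set u | (u, e) \in trail_incidences x ((e, w) :: s)] = [set x; w].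
    by rewrite cards2 xw.
  apply/setP => u; have eRs : (u, e) \notin trail_incidences w s.
    by apply: contra e'N => /mem_trail_incidences /andP [].
  by rewrite !inE /= !xpair_eqE !eqxx !andbT (negbTE eRs) orbF.
have ee' : (e == e') = false by apply: contraNF e'N => /eqP <-.
rewrite -(IH w) //; apply: eq_card => u.
by rewrite !inE /= !xpair_eqE ee' !andbF.
Qed.

Definition family_incidences (F : seq (walk V E)) : {set V * E} :=
  [set p | has (fun W : walk V E => p \in trail_incidences W.1 W.2) F].

Section EulerFamily.
Variable F : seq (walk V E).
Hypothesis famF : euler_family inc F.

Let closed_trail W : W \in F ->
  [/\ walk_steps inc W.1 W.2, last_anchor W.1 W.2 = W.1 & uniq (map fst W.2)].
Proof.
case: famF => /allP trailF _ _ /trailF /and3P [walkW /andP [_ /eqP closedW] uniqW].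
by split.
Qed.

Lemma family_incidences_sub : family_incidences F \subset incidences.
Proof.
apply/subsetP => p; rewrite inE => /hasP [W WF pW].
by have [walkW _ _] := closed_trail WF; apply: trail_incidences_sub pW.
Qed.

Lemma family_vertex_fiber_even v :
  ~~ odd #|[set e | (v, e) \in family_incidences F]|.
Proof.
case: famF => _ _ disjF.
have [/hasP [W WF vW] | noW] := boolP (has (fun W => v \in anchors W) F).
  have [walkW closedW uniqW] := closed_trail WF.
  suff -> : [set e | (v, e) \in family_incidences F] =
            [set e | (v, e) \in trail_incidences W.1 W.2].
    by rewrite odd_trail_vertex_fiber // closedW addbb.
  apply/setP => e; rewrite !inE; apply/hasP/idP => [[W' W'F veW'] | ]; last by exists W.
  have /andP [vW' _] := mem_trail_incidences veW'.
  by rewrite (pairwise_disjoint_eq disjF WF W'F vW vW').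
rewrite (_ : [set e | _] = set0) ?cards0 //; apply/setP => e; rewrite !inE.
apply/hasP => -[W WF /mem_trail_incidences /andP [vW _]].
by move/hasP: noW; apply; exists W.
Qed.

Lemma family_edge_fiber e : #|[set u | (u, e) \in family_incidences F]| = 2.
Proof.
case: famF => _ countF _.
have /hasP [W WF eW] : has (fun W => e \in walk_edges W) F by rewrite has_count countF.
have [walkW _ uniqW] := closed_trail WF.
rewrite -(card_trail_edge_fiber walkW uniqW eW); apply: eq_card => u; rewrite !inE.
apply/hasP/idP => [[W' W'F ueW'] | ]; last by exists W.
have /andP [_ eW'] := mem_trail_incidences ueW'.
by rewrite (count_eq1_eq (countF e) WF eW W'F eW').
Qed.

End EulerFamily.

Lemma spanning_subgraph_of_quasi_eulerian :
  three_uniform inc -> (forall v, ~~ odd (vdeg inc v)) ->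
  quasi_eulerian inc -> exists S, good_spanning_subgraph inc S.
Proof.
move=> uniH evenH [F famF]; have sTI := family_incidences_sub famF.
exists (incidences :\: family_incidences F); split => [p | v | e].
- by rewrite !inE => /andP [].
- apply/negP => oddS; move: (evenH v); rewrite -(vertex_fiber_setD v sTI) oddD oddS.
  by rewrite (negbTE (family_vertex_fiber_even famF v)).
- by apply/eqP; rewrite -(eqn_add2r 2) -{1}(family_edge_fiber famF e) edge_fiber_setD ?uniH.
Qed.

End Incidences.

Lemma seq_ind2 (T : Type) (P : seq T -> Prop) :
  P [::] -> (forall a, P [:: a]) -> (forall a b s, P s -> P [:: a, b & s]) ->
  forall s, P s.
Proof.
move=> P0 P1 P2 s; have [n] := ubnP (size s); elim: n s => // n IH.
by case=> [|a [|b s]] //= /ltnSE sz_s; apply/P2/IH/(leq_ltn_trans _ sz_s).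
Qed.

Section Pairs.
Variable T : finType.

Fixpoint pairs (s : seq T) : seq {set T} :=
  if s is a :: b :: t then [set a; b] :: pairs t else [::].

Lemma mem_pairs s B : uniq s -> B \in pairs s ->
  exists a b, [/\ a != b, a \in s, b \in s & B = [set a; b]].
Proof.
elim/seq_ind2: s => [|a|a b s IH] //= /and3P [].
rewrite inE negb_or => /andP [ab _] _ uniq_s; rewrite inE => /orP [/eqP -> | Bs].
  by exists a, b; rewrite !inE !eqxx orbT.
by have [x [y [xy xs ys ->]]] := IH uniq_s Bs; exists x, y; rewrite !inE xs ys !orbT.
Qed.

Lemma pairs_sub s B : uniq s -> B \in pairs s -> {subset B <= s}.
Proof.
move=> uniq_s /(mem_pairs uniq_s) [a [b [_ a_s b_s ->]]] x.
by rewrite !inE => /orP [] /eqP ->.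
Qed.

Lemma pairs_cover s x : ~~ odd (size s) -> x \in s ->
  exists2 B, B \in pairs s & x \in B.
Proof.
elim/seq_ind2: s => [|a|a b s IH] //=; rewrite negbK => even_s.
rewrite !inE => /or3P [/eqP -> | /eqP -> | /(IH even_s) [B Bs xB]].
- by exists [set a; b]; rewrite !inE ?eqxx.
- by exists [set a; b]; rewrite !inE ?eqxx ?orbT.
- by exists B; rewrite // inE Bs orbT.
Qed.

Lemma pairs_disjoint s B1 B2 : uniq s -> B1 \in pairs s -> B2 \in pairs s ->
  B1 != B2 -> [disjoint B1 & B2].
Proof.
elim/seq_ind2: s B1 B2 => [|a|a b s IH] B1 B2 //= /and3P [].
rewrite inE negb_or => /andP [_ a_s] b_s uniq_s.
have disj_ab B : B \in pairs s -> [disjoint [set a; b] & B].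
  move=> Bs; rewrite disjoint_sym disjoint_subset; apply/subsetP => x.
  by move/(pairs_sub uniq_s Bs); rewrite !inE; apply: contraL => /orP [] /eqP ->.
rewrite !inE => /orP [/eqP -> | B1s] /orP [/eqP -> | B2s]; rewrite ?eqxx //.
- by move=> _; apply: disj_ab.
- by move=> _; rewrite disjoint_sym; apply: disj_ab.
- exact: IH.
Qed.

End Pairs.

Section PairPartitions.
Variables (V E : finType) (inc : E -> {set V}).

Lemma pair_partition_of_spanning_subgraph S :
  good_spanning_subgraph inc S -> exists P, intersecting_pair_partition inc P.
Proof.
move=> [SI evenS oneS]; pose Ev v := [set e | (v, e) \in S].
have S_fun e v1 v2 : (v1, e) \in S -> (v2, e) \in S -> v1 = v2.
  have /eqP /cards1P [w Sw] := oneS e; move=> v1e v2e.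
  have : v1 \in [set v | (v, e) \in S] by rewrite inE.
  have : v2 \in [set v | (v, e) \in S] by rewrite inE.
  by rewrite Sw !inE => /eqP -> /eqP ->.
exists [set B | [exists v, B \in pairs (enum (Ev v))]]; split.
  apply/and3P; split.
  - rewrite eqEsubset subsetT; apply/subsetP => e _.
    have /card_gt0P [v] : 0 < #|[set v | (v, e) \in S]| by rewrite oneS.
    rewrite inE => veS; have even_v : ~~ odd (size (enum (Ev v))) by rewrite -cardE; apply: evenS.
    have e_v : e \in enum (Ev v) by rewrite mem_enum inE.
    have [B Bv eB] := pairs_cover even_v e_v.
    by apply/bigcupP; exists B; rewrite // inE; apply/existsP; exists v.
  - apply/trivIsetP => B1 B2; rewrite !inE => /existsP [v1 B1v1] /existsP [v2 B2v2].
    have [v12 | v12] := eqVneq v1 v2.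
      by move: B2v2; rewrite -v12; exact: pairs_disjoint (enum_uniq _) B1v1.
    move=> _; rewrite -setI_eq0; apply/eqP/setP => e; rewrite !inE; apply/negP.
    case/andP=> /(pairs_sub (enum_uniq _) B1v1) e1 /(pairs_sub (enum_uniq _) B2v2) e2.
    by move: e1 e2 v12; rewrite !mem_enum !inE => /S_fun h /h ->; rewrite eqxx.
  - apply/negP; rewrite inE => /existsP [v /(mem_pairs (enum_uniq _))].
    by case=> a [b [_ _ _ /setP /(_ a)]]; rewrite !inE eqxx.
move=> B; rewrite inE => /existsP [v /(mem_pairs (enum_uniq _))].
case=> a [b [ab aS bS ->]]; exists a, b; split => //; apply/set0Pn; exists v.
by move: aS bS; rewrite !mem_enum !inE => /SI ? /SI ?; apply/andP.
Qed.

Lemma spanning_subgraph_of_pair_partition (x0 : V) P :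
  intersecting_pair_partition inc P -> exists S, good_spanning_subgraph inc S.
Proof.
move=> [/and3P [/eqP coverP trivP _] pairP].
have /fin_all_exists [c cP] :
    forall B : {set E}, exists v, B \in P -> forall e, e \in B -> v \in inc e.
  move=> B; have [BP | notBP] := boolP (B \in P); last by exists x0 => BP; case/negP: notBP.
  have [e1 [e2 [_ -> /set0Pn [v]]]] := pairP B BP; rewrite inE => /andP [v1 v2].
  by exists v => _ e; rewrite !inE => /orP [] /eqP ->.
have blockP e : pblock P e \in P by rewrite pblock_mem // coverP inE.
exists [set p | p.1 == c (pblock P p.2)]; split => [[v e] | v | e].
- by rewrite inE /= => /eqP ->; apply: cP; rewrite ?mem_pblock ?coverP ?inE.
- have -> : [set e | (v, e) \in [set p | p.1 == c (pblock P p.2)]] =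
            cover [set B in P | c B == v].
    apply/setP => e; rewrite !inE; apply/idP/bigcupP => [/eqP cv | [B]].
      by exists (pblock P e); rewrite ?inE ?blockP -?cv ?eqxx // mem_pblock coverP inE.
    by rewrite inE => /andP [BP /eqP <-] eB; rewrite (def_pblock trivP BP eB).
  have : trivIset [set B in P | c B == v].
    by apply: trivIsetS trivP; apply/subsetP => B; rewrite inE => /andP [].
  rewrite /trivIset => /eqP <-; rewrite (eq_bigr (fun _ => 2)) ?sum_nat_const ?oddM ?andbF //.
  move=> B; rewrite inE => /andP [BP _]; have [e1 [e2 [e12 -> _]]] := pairP B BP.
  by rewrite cards2 e12.
- rewrite (_ : [set v | _] = [set c (pblock P e)]) ?cards1 //.
  by apply/setP => v; rewrite !inE.
Qed.

End PairPartitions.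

Theorem theorem2p38 (V E : finType) (inc : E -> {set V}) :
  0 < #|V| ->
  three_uniform inc ->
  (forall v : V, ~~ odd (vdeg inc v)) ->
  (quasi_eulerian inc <->
     exists S : {set V * E}, good_spanning_subgraph inc S) /\
  ((exists S : {set V * E}, good_spanning_subgraph inc S) <->
     exists P : {set {set E}}, intersecting_pair_partition inc P).
Proof.
move=> /card_gt0P [x0 _] uniH evenH; split; split.
- exact: spanning_subgraph_of_quasi_eulerian.
- by case=> S; apply: quasi_eulerian_of_spanning_subgraph.
- by case=> S; apply: pair_partition_of_spanning_subgraph.
- by case=> P; apply: spanning_subgraph_of_pair_partition.
Qed.
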